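(* Let $X$ be a CAT(0) Euclidean polygonal complex and let $x,y,z\in X$. Then the geodesic triangle $\triangle(x,y,z)$ is (homeomorphic to) a spiky triangle.
   Context: A CAT(0) Euclidean polygonal complex is a 2-dimensional polygonal complex whose cells are convex Euclidean polygons, with its induced length metric, assumed CAT(0). $\overline{ab}$ denotes the unique geodesic between $a,b$; $\triangle(x,y,z)=\overline{xy}\cup\overline{yz}\cup\overline{zx}$. A spiky triangle is the topological space obtained by gluing a possibly degenerate interval at one endpoint to each of the three vertices of the boundary of a possibly degenerate Euclidean triangle. *)

From Stdlib Require Import Reals List.
Open Scope R_scope.

Definition R2 : Type := (R * R)%type.
Definition R3 : Type := (R * R * R)%type.

Definition dist2 (p q : R2) : R :=
  sqrt ((fst p - fst q)^2 + (snd p - snd q)^2).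

Definition dot2 (u p : R2) : R := fst u * fst p + snd u * snd p.

Definition interp2 (a b : R2) (th : R) : R2 :=
  (fst a + th * (fst b - fst a), snd a + th * (snd b - snd a)).

Definition seg2 (a b : R2) (v : R2) : Prop :=
  exists th, 0 <= th <= 1 /\ v = interp2 a b th.

Definition is_metric {X : Type} (d : X -> X -> R) : Prop :=
  (forall x y, 0 <= d x y) /\ (forall x, d x x = 0) /\
  (forall x y, d x y = 0 -> x = y) /\ (forall x y, d x y = d y x) /\
  (forall x y z, d x z <= d x y + d y z).

Definition cont_on {A B : Type} (dA : A -> A -> R) (dB : B -> B -> R)
  (f : A -> B) (S : A -> Prop) : Prop :=
  forall a, S a -> forall e, 0 < e -> exists del, 0 < del /\
    forall a', S a' -> dA a a' < del -> dB (f a) (f a') < e.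

Definition geodesic {X : Type} (d : X -> X -> R) (x y : X) (g : R -> X) : Prop :=
  g 0 = x /\ g 1 = y /\
  forall s t, 0 <= s <= 1 -> 0 <= t <= 1 -> d (g s) (g t) = Rabs (s - t) * d x y.

Definition geodesic_space {X : Type} (d : X -> X -> R) : Prop :=
  is_metric d /\ forall x y, exists g, geodesic d x y g.

Definition CAT0 {X : Type} (d : X -> X -> R) : Prop :=
  geodesic_space d /\
  forall (x y z : X) (g1 g2 g3 : R -> X),
    geodesic d x y g1 -> geodesic d y z g2 -> geodesic d z x g3 ->
    forall xb yb zb : R2,
      dist2 xb yb = d x y -> dist2 yb zb = d y z -> dist2 zb xb = d z x ->
      let side (k : nat) : (R -> X) * (R2 * R2) :=
        match k with
        | O => (g1, (xb, yb))
        | S O => (g2, (yb, zb))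
        | _ => (g3, (zb, xb))
        end in
      forall (k m : nat) (s t : R), 0 <= s <= 1 -> 0 <= t <= 1 ->
        d (fst (side k) s) (fst (side m) t)
        <= dist2 (interp2 (fst (snd (side k))) (snd (snd (side k))) s)
                 (interp2 (fst (snd (side m))) (snd (snd (side m))) t).

(** the geodesic segment \overline{ab} (as a set; unique in a CAT(0) space) *)
Definition geod_seg {X : Type} (d : X -> X -> R) (a b : X) (p : X) : Prop :=
  exists g th, geodesic d a b g /\ 0 <= th <= 1 /\ p = g th.

Definition geod_triangle {X : Type} (d : X -> X -> R) (x y z : X) (p : X) : Prop :=
  geod_seg d x y p \/ geod_seg d y z p \/ geod_seg d z x p.

Fixpoint lincomb (w : list R) (vs : list R2) : R2 :=
  match w, vs with
  | a :: w', v :: vs' =>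
      let r := lincomb w' vs' in (a * fst v + fst r, a * snd v + snd r)
  | _, _ => (0, 0)
  end.

Definition conv_hull (vs : list R2) (p : R2) : Prop :=
  exists w : list R, length w = length vs /\ Forall (fun a => 0 <= a) w /\
    fold_right Rplus 0 w = 1 /\ p = lincomb w vs.

(** a convex Euclidean polygon: convex hull of finitely many points,
    with nonempty interior (i.e. 2-dimensional) *)
Definition convex_polygon (P : R2 -> Prop) : Prop :=
  (exists vs : list R2, forall p, P p <-> conv_hull vs p) /\
  (exists c r, 0 < r /\ forall p, dist2 c p < r -> P p).

(** faces of a convex polygon: the polygon itself, or its intersection with a
    supporting line (vertices, edges; possibly empty) *)
Definition face (P F : R2 -> Prop) : Prop :=
  (forall p, F p <-> P p) \/
  exists (u : R2) (c : R), u <> (0, 0) /\ (forall p, P p -> dot2 u p <= c) /\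
    (forall p, F p <-> (P p /\ dot2 u p = c)).

(** * Euclidean polygonal complexes (M_0-polyhedral complexes of dimension 2,
    all of whose cells are convex Euclidean polygons, Bridson–Haefliger I.7.37),
    with the metric d being the induced (intrinsic) length metric. *)

(** an m-string from x to y: consecutive points lie in a common cell; each step
    (i, p, q) is the Euclidean segment from p to q inside the cell P i *)
Fixpoint is_string {X I : Type} (P : I -> R2 -> Prop) (phi : I -> R2 -> X)
  (x y : X) (s : list (I * R2 * R2)) : Prop :=
  match s with
  | nil => x = y
  | (i, p, q) :: s' =>
      P i p /\ P i q /\ phi i p = x /\ is_string P phi (phi i q) y s'
  end.

Fixpoint string_length {I : Type} (s : list (I * R2 * R2)) : R :=
  match s with
  | nil => 0
  | (_, p, q) :: s' => dist2 p q + string_length s'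
  end.

Definition polygonal_complex {X I : Type} (d : X -> X -> R)
  (P : I -> R2 -> Prop) (phi : I -> R2 -> X) : Prop :=
  (forall i, convex_polygon (P i)) /\
  (forall i p q, P i p -> P i q -> phi i p = phi i q -> p = q) /\
  (forall x, exists i p, P i p /\ phi i p = x) /\
  (forall i j p q, P i p -> P j q -> phi i p = phi j q ->
     exists (T T' : R2 -> Prop) (h : R2 -> R2),
       face (P i) T /\ face (P j) T' /\ T p /\ T' q /\
       (forall v, T v -> T' (h v) /\ phi j (h v) = phi i v) /\
       (forall v v', T v -> T v' -> dist2 (h v) (h v') = dist2 v v') /\
       (forall v', T' v' -> exists v, T v /\ h v = v')) /\
  is_metric d /\
  (forall x y,
     (forall s, is_string P phi x y s -> d x y <= string_length s) /\
     (forall e, 0 < e -> exists s, is_string P phi x y s /\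
                                  string_length s < d x y + e)).

(** * Spiky triangles
    Concrete model inside R^2 x R^3: the boundary [a,b] ∪ [b,c] ∪ [c,a] of a
    (possibly degenerate) triangle lies in R^2 x {0}; the interval of length
    l1 (resp. l2, l3) is glued at a (resp. b, c) and points in the direction
    of the first (resp. second, third) coordinate axis of R^3. *)
Definition dist5 (u v : R2 * R3) : R :=
  let '((p1, p2), (q1, q2, q3)) := u in
  let '((p1', p2'), (q1', q2', q3')) := v in
  sqrt ((p1 - p1')^2 + (p2 - p2')^2 + (q1 - q1')^2 + (q2 - q2')^2 + (q3 - q3')^2).

Definition spiky_triangle (a b c : R2) (l1 l2 l3 : R) (u : R2 * R3) : Prop :=
  ((seg2 a b (fst u) \/ seg2 b c (fst u) \/ seg2 c a (fst u)) /\ snd u = (0, 0, 0))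
  \/ (exists t, 0 <= t <= l1 /\ u = (a, (t, 0, 0)))
  \/ (exists t, 0 <= t <= l2 /\ u = (b, (0, t, 0)))
  \/ (exists t, 0 <= t <= l3 /\ u = (c, (0, 0, t))).

Definition homeomorphic_to_spiky_triangle {X : Type} (d : X -> X -> R)
  (T : X -> Prop) : Prop :=
  exists (a b c : R2) (l1 l2 l3 : R), 0 <= l1 /\ 0 <= l2 /\ 0 <= l3 /\
  exists (f : X -> R2 * R3) (g : R2 * R3 -> X),
    (forall p, T p -> spiky_triangle a b c l1 l2 l3 (f p) /\ g (f p) = p) /\
    (forall u, spiky_triangle a b c l1 l2 l3 u -> T (g u) /\ f (g u) = u) /\
    cont_on d dist5 f T /\
    cont_on dist5 d g (spiky_triangle a b c l1 l2 l3).

From Stdlib Require Import Reals List Lra Psatz ClassicalEpsilon Classical.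
Open Scope R_scope.

(* In a CAT(0) space geodesics are unique, so the two sides of a geodesic
   triangle issuing from a vertex agree on an initial segment (a spike) and are disjoint
   afterwards.  The spikes either cover the whole triangle (a tripod) or leave three
   nondegenerate core edges, and in both cases where the arc-length parametrized sides meet
   depends only on the side lengths and the spike lengths.  An explicit parametrization of
   the spiky triangle with the same spike lengths in R^2 x R^3 meets itself in the same
   pattern; as both parametrizations are bi-Lipschitz on each side, the induced bijection
   between the two traces is a homeomorphism. *)

Ltac case_minmax := unfold Rmax, Rmin, Rabs;
  repeat match goal with
  | |- context [Rle_dec ?a ?b] => destruct (Rle_dec a b)
  | |- context [Rcase_abs ?a] => destruct (Rcase_abs a)
  | H : context [Rle_dec ?a ?b] |- _ => destruct (Rle_dec a b)
  end; lra.

Lemma Rdiv_unit_interval s D : 0 <= s <= D -> 0 <= s / D <= 1.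
Proof.
  intros Hs. destruct (Req_dec D 0) as [->|HD].
  - unfold Rdiv. rewrite Rinv_0, Rmult_0_r. lra.
  - assert (E : s / D * D = s) by (field; lra). split; nra.
Qed.

Lemma dist2_on_axis p q : dist2 (p, 0) (q, 0) = Rabs (p - q).
Proof.
  unfold dist2; cbn [fst snd].
  replace ((p - q) ^ 2 + (0 - 0) ^ 2) with (Rsqr (p - q)) by (unfold Rsqr; ring).
  apply sqrt_Rsqr_abs.
Qed.

Lemma dist2_self p : dist2 p p = 0.
Proof. unfold dist2. rewrite !Rminus_diag, pow_i, Rplus_0_r by lia. apply sqrt_0. Qed.

Section Geodesics.

Context {X : Type} {d : X -> X -> R} (d_metric : is_metric d).

Lemma metric_nonneg x y : 0 <= d x y.
Proof. apply d_metric. Qed.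

Lemma metric_self x : d x x = 0.
Proof. apply d_metric. Qed.

Lemma metric_eq0 x y : d x y = 0 -> x = y.
Proof. apply d_metric. Qed.

Lemma metric_sym x y : d x y = d y x.
Proof. apply d_metric. Qed.

Lemma metric_triangle x y z : d x z <= d x y + d y z.
Proof. apply d_metric. Qed.

Lemma metric_lipschitz a u v : Rabs (d a u - d a v) <= d u v.
Proof.
  pose proof (metric_triangle a v u). pose proof (metric_triangle a u v).
  rewrite (metric_sym v u) in *. apply Rabs_le. lra.
Qed.

Lemma geodesic_rev x y g : geodesic d x y g -> geodesic d y x (fun t => g (1 - t)).
Proof.
  intros (G0 & G1 & Gd). split; [|split].
  - now rewrite Rminus_0_r.
  - now rewrite Rminus_diag.
  - intros s t Hs Ht. rewrite Gd, metric_sym by lra. f_equal.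
    rewrite <- Rabs_Ropp. f_equal. ring.
Qed.

(* Arc-length reparametrization on [[0, D]] of a geodesic [g] defined on [[0, 1]]; for
   [D = 0], Rocq's [s / 0 = 0] makes it the constant [g 0]. *)
Definition arc (g : R -> X) (D s : R) : X := g (s / D).

Lemma arc0 g D : arc g D 0 = g 0.
Proof. unfold arc, Rdiv. now rewrite Rmult_0_l. Qed.

Lemma arc_isometry x y g s s' :
  geodesic d x y g -> 0 <= s <= d x y -> 0 <= s' <= d x y ->
  d (arc g (d x y) s) (arc g (d x y) s') = Rabs (s - s').
Proof.
  intros (_ & _ & Gd) Hs Hs'. unfold arc.
  destruct (Req_dec (d x y) 0) as [HD|HD].
  - replace s with 0 by lra. replace s' with 0 by lra.
    now rewrite metric_self, Rminus_0_r, Rabs_R0.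
  - pose proof (metric_nonneg x y).
    rewrite Gd by (apply Rdiv_unit_interval; lra).
    replace (s / d x y - s' / d x y) with ((s - s') / d x y) by (field; lra).
    unfold Rdiv. rewrite Rabs_mult, Rabs_inv, (Rabs_right (d x y)) by lra. field; lra.
Qed.

Lemma arc_dist_start x y g s :
  geodesic d x y g -> 0 <= s <= d x y -> d x (arc g (d x y) s) = s.
Proof.
  intros Hg Hs. rewrite <- (proj1 Hg) at 1.
  rewrite <- (arc0 g (d x y)), (arc_isometry x y) by (auto; lra).
  rewrite Rabs_minus_sym, Rminus_0_r. apply Rabs_right. lra.
Qed.

Lemma arc_rev x y g s :
  geodesic d x y g -> 0 <= s <= d x y ->
  arc g (d x y) s = arc (fun t => g (1 - t)) (d x y) (d x y - s).
Proof.
  intros (G0 & G1 & _) Hs. unfold arc.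
  destruct (Req_dec (d x y) 0) as [HD|HD].
  - rewrite HD. replace s with 0 by lra. unfold Rdiv. rewrite Rinv_0, !Rmult_0_r, Rminus_0_r.
    rewrite G0, G1. now apply metric_eq0.
  - f_equal. field. exact HD.
Qed.

Lemma geodesic_restrict x y g r :
  geodesic d x y g -> 0 <= r <= d x y ->
  geodesic d x (arc g (d x y) r) (fun t => arc g (d x y) (t * r)).
Proof.
  intros Hg Hr. split; [|split].
  - rewrite Rmult_0_l, arc0. apply Hg.
  - now rewrite Rmult_1_l.
  - intros s t Hs Ht. rewrite arc_isometry, arc_dist_start by (auto; nra).
    rewrite <- Rmult_minus_distr_r, Rabs_mult, (Rabs_right r) by lra. reflexivity.
Qed.

End Geodesics.

Lemma CAT0_is_metric {X : Type} (d : X -> X -> R) : CAT0 d -> is_metric d.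
Proof. intros Hc. apply Hc. Qed.

Section CAT0Geodesics.

Context {X : Type} {d : X -> X -> R} (d_CAT0 : CAT0 d).

Let d_metric : is_metric d := CAT0_is_metric d d_CAT0.

(* The comparison triangle of the degenerate triangle [a, b, a] is a doubled segment. *)
Lemma CAT0_geodesic_unique a b g1 g2 t :
  geodesic d a b g1 -> geodesic d a b g2 -> 0 <= t <= 1 -> g1 t = g2 t.
Proof.
  intros G1 G2 Ht.
  assert (Ga : geodesic d a a (fun _ => a)).
  { split; [|split]; auto. intros. rewrite metric_self by exact d_metric. ring. }
  assert (Eab : dist2 (0, 0) (d a b, 0) = d a b).
  { rewrite dist2_on_axis, Rabs_minus_sym, Rminus_0_r.
    apply Rabs_right, Rle_ge, metric_nonneg, d_metric. }
  assert (Eba : dist2 (d a b, 0) (0, 0) = d b a).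
  { rewrite dist2_on_axis, Rminus_0_r, (metric_sym d_metric b a).
    apply Rabs_right, Rle_ge, metric_nonneg, d_metric. }
  assert (Eaa : dist2 (0, 0) (0, 0) = d a a).
  { rewrite dist2_on_axis, (metric_self d_metric), Rminus_0_r. apply Rabs_R0. }
  pose proof (proj2 d_CAT0 a b a g1 _ (fun _ => a) G1 (geodesic_rev d_metric _ _ _ G2) Ga
    _ _ _ Eab Eba Eaa O (S O) t (1 - t) Ht ltac:(lra)) as C.
  cbn [fst snd] in C. replace (1 - (1 - t)) with t in C by ring.
  replace (interp2 (d a b, 0) (0, 0) (1 - t)) with (interp2 (0, 0) (d a b, 0) t) in C
    by (unfold interp2; cbn [fst snd]; f_equal; ring).
  rewrite dist2_self in C.
  apply (metric_eq0 d_metric), Rle_antisym; [exact C | apply metric_nonneg, d_metric].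
Qed.

Lemma geod_seg_arc a b g p :
  geodesic d a b g ->
  (geod_seg d a b p <-> exists s, 0 <= s <= d a b /\ p = arc g (d a b) s).
Proof.
  intros Hg. pose proof (metric_nonneg d_metric a b). split.
  - intros (g' & th & Hg' & Hth & ->).
    rewrite <- (CAT0_geodesic_unique a b g g' th Hg Hg' Hth).
    exists (th * d a b). split; [nra|]. unfold arc.
    destruct (Req_dec (d a b) 0) as [Z|Z].
    + rewrite Z, Rmult_0_r. unfold Rdiv. rewrite Rmult_0_l.
      apply (metric_eq0 d_metric). rewrite (proj2 (proj2 Hg)) by lra. rewrite Z. ring.
    + f_equal. field. exact Z.
  - intros (s & Hs & ->). exists g, (s / d a b).
    split; [exact Hg | split; [apply Rdiv_unit_interval; lra | reflexivity]].
Qed.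

Lemma CAT0_arcs_agree_below v y z g h r0 r :
  geodesic d v y g -> geodesic d v z h -> 0 <= r0 <= d v y -> 0 <= r0 <= d v z ->
  arc g (d v y) r0 = arc h (d v z) r0 -> 0 <= r <= r0 -> arc g (d v y) r = arc h (d v z) r.
Proof.
  intros Hg Hh Hy Hz E Hr. destruct (Req_dec r0 0) as [Z|Z].
  - replace r with 0 by lra. now rewrite !arc0, (proj1 Hg), (proj1 Hh).
  - pose proof (geodesic_restrict d_metric _ _ _ r0 Hg Hy) as Gg.
    pose proof (geodesic_restrict d_metric _ _ _ r0 Hh Hz) as Gh. rewrite <- E in Gh.
    pose proof (CAT0_geodesic_unique _ _ _ _ (r / r0) Gg Gh) as U.
    cbv beta in U. replace (r / r0 * r0) with r in U by (field; exact Z).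
    apply U, Rdiv_unit_interval. lra.
Qed.

Lemma arcs_agree_of_approx v y z g h a :
  geodesic d v y g -> geodesic d v z h -> 0 <= a <= d v y -> 0 <= a <= d v z ->
  (forall e, 0 < e -> exists r0,
     a - e < r0 <= a /\ 0 <= r0 /\ arc g (d v y) r0 = arc h (d v z) r0) ->
  arc g (d v y) a = arc h (d v z) a.
Proof.
  intros Hg Hh Hy Hz Happrox.
  apply (metric_eq0 d_metric), Rle_antisym; [|apply metric_nonneg, d_metric].
  apply Rnot_lt_le. intros Hpos.
  set (e := d (arc g (d v y) a) (arc h (d v z) a)) in *.
  destruct (Happrox (e / 2) ltac:(lra)) as (r0 & Hr0 & Hr0' & E0).
  assert (Dg : d (arc g (d v y) a) (arc g (d v y) r0) = a - r0).
  { rewrite (arc_isometry d_metric v y) by (auto; lra). apply Rabs_right. lra. }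
  assert (Dh : d (arc h (d v z) r0) (arc h (d v z) a) = a - r0).
  { rewrite (arc_isometry d_metric v z), Rabs_minus_sym by (auto; lra).
    apply Rabs_right. lra. }
  pose proof (metric_triangle d_metric (arc g (d v y) a) (arc g (d v y) r0) (arc h (d v z) a)).
  rewrite E0 in *. unfold e in *. lra.
Qed.

(* The meeting distances of two geodesics from [v] form an interval [[0, a]]: it is
   down-closed by uniqueness of geodesics, and contains its supremum by continuity. *)
Lemma CAT0_geodesics_branch v y z g h :
  geodesic d v y g -> geodesic d v z h ->
  exists a, 0 <= a <= Rmin (d v y) (d v z) /\
  forall r r', 0 <= r <= d v y -> 0 <= r' <= d v z ->
    (arc g (d v y) r = arc h (d v z) r' <-> r = r' /\ r <= a).
Proof.
  intros Hg Hh.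
  pose proof (Rmin_l (d v y) (d v z)). pose proof (Rmin_r (d v y) (d v z)).
  pose proof (metric_nonneg d_metric v y). pose proof (metric_nonneg d_metric v z).
  set (m := Rmin (d v y) (d v z)) in *.
  assert (Hm0 : 0 <= m) by (unfold m; apply Rmin_glb; lra).
  set (S r := 0 <= r <= m /\ arc g (d v y) r = arc h (d v z) r).
  destruct (completeness S) as [a [Ha_ub Ha_least]].
  { exists m. intros r [Hr _]. lra. }
  { exists 0. split; [lra|]. now rewrite !arc0, (proj1 Hg), (proj1 Hh). }
  assert (Ha : 0 <= a <= m).
  { split; [apply Ha_ub; split; [lra | now rewrite !arc0, (proj1 Hg), (proj1 Hh)]|].
    apply Ha_least. intros r [Hr _]. lra. }
  assert (Sa : arc g (d v y) a = arc h (d v z) a).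
  { apply arcs_agree_of_approx; auto; try lra. intros e He.
    destruct (classic (exists r0, S r0 /\ a - e < r0)) as [[r0 [[Hr0 E0] Hlt]]|Hn].
    - exists r0. split; [split; [lra | now apply Ha_ub] | split; [lra | exact E0]].
    - exfalso. assert (a <= a - e); [|lra].
      apply Ha_least. intros r Sr. apply Rnot_lt_le. intros Hr. apply Hn. now exists r. }
  exists a. split; [exact Ha|]. intros r r' Hr Hr'. split.
  - intros E.
    assert (Er : r = r').
    { rewrite <- (arc_dist_start d_metric v y g r Hg Hr),
              <- (arc_dist_start d_metric v z h r' Hh Hr'), E. reflexivity. }
    subst r'. split; [reflexivity|]. apply Ha_ub.
    split; [split; [lra | unfold m; apply Rmin_glb; lra] | exact E].
  - intros [<- Hra]. apply (CAT0_arcs_agree_below v y z g h a r); auto; lra.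
Qed.

Lemma CAT0_glued_at_vertex v w y g h :
  geodesic d v y g -> geodesic d w v h ->
  exists a, 0 <= a <= Rmin (d v y) (d w v) /\
  forall s s', 0 <= s <= d w v -> 0 <= s' <= d v y ->
    (arc h (d w v) s = arc g (d v y) s' <-> s' = d w v - s /\ s' <= a).
Proof.
  intros Hg Hh.
  destruct (CAT0_geodesics_branch v y w g _ Hg (geodesic_rev d_metric _ _ _ Hh)) as (a & Ha & Hbr).
  rewrite (metric_sym d_metric v w) in Ha, Hbr.
  exists a. split; [exact Ha|]. intros s s' Hs Hs'.
  rewrite (arc_rev d_metric w v h s Hh Hs).
  split.
  - intros E. symmetry in E. apply Hbr in E; lra.
  - intros H. symmetry. apply Hbr; lra.
Qed.

End CAT0Geodesics.

Definition side3 {A : Type} (t : A * A * A) (k : nat) : A :=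
  match k with O => fst (fst t) | S O => snd (fst t) | _ => snd t end.

(* [G1], [G2], [G3] run (by arc length) from x to y, y to z and z to x; the two sides
   issuing from x, y, z share exactly their initial spikes of lengths [a], [b], [c]. *)
Record glued_along_spikes {A : Type} (G1 G2 G3 : R -> A) (D1 D2 D3 a b c : R) : Prop := {
  spike_bounds : 0 <= a /\ a <= D1 /\ a <= D3 /\ 0 <= b /\ b <= D2 /\ b <= D1 /\
                 0 <= c /\ c <= D3 /\ c <= D2;
  glued_at_x : forall s s', 0 <= s <= D3 -> 0 <= s' <= D1 ->
    (G3 s = G1 s' <-> s' = D3 - s /\ s' <= a);
  glued_at_y : forall s s', 0 <= s <= D1 -> 0 <= s' <= D2 ->
    (G1 s = G2 s' <-> s' = D1 - s /\ s' <= b);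
  glued_at_z : forall s s', 0 <= s <= D2 -> 0 <= s' <= D3 ->
    (G2 s = G3 s' <-> s' = D2 - s /\ s' <= c)
}.

Lemma glued_rotate {A : Type} {G1 G2 G3 : R -> A} {D1 D2 D3 a b c : R} :
  glued_along_spikes G1 G2 G3 D1 D2 D3 a b c -> glued_along_spikes G2 G3 G1 D2 D3 D1 b c a.
Proof. intros [B Gx Gy Gz]. split; auto. lra. Qed.

(* If the spikes at x and y overlapped, the point of side 1 at distance [D1 - b] from x
   would lie on all three sides, at inconsistent positions. *)
Lemma glued_spikes_le_side {A : Type} {G1 G2 G3 : R -> A} {D1 D2 D3 a b c : R} :
  glued_along_spikes G1 G2 G3 D1 D2 D3 a b c -> a + b <= D1.
Proof.
  intros [B Gx Gy Gz]. apply Rnot_lt_le. intros Hlt.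
  assert (E1 : G3 (D3 - (D1 - b)) = G1 (D1 - b)) by (apply Gx; lra).
  assert (E2 : G1 (D1 - b) = G2 b) by (apply Gy; lra).
  assert (F1 : G3 (D3 - a) = G1 a) by (apply Gx; lra).
  assert (F2 : G1 a = G2 (D1 - a)) by (apply Gy; lra).
  assert (E3 : G2 b = G3 (D3 - (D1 - b))) by congruence.
  assert (F3 : G2 (D1 - a) = G3 (D3 - a)) by congruence.
  apply Gz in E3; [|lra|lra]. apply Gz in F3; [|lra|lra]. lra.
Qed.

Lemma glued_spikes_fill_next_side {A : Type} {G1 G2 G3 : R -> A} {D1 D2 D3 a b c : R} :
  glued_along_spikes G1 G2 G3 D1 D2 D3 a b c -> a + b = D1 -> b + c = D2.
Proof.
  intros Gl Hab. pose proof (glued_spikes_le_side (glued_rotate Gl)).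
  destruct Gl as [B Gx Gy Gz].
  assert (F1 : G3 (D3 - a) = G1 a) by (apply Gx; lra).
  assert (F2 : G1 a = G2 b) by (apply Gy; lra).
  assert (F3 : G2 b = G3 (D3 - a)) by congruence.
  apply Gz in F3; lra.
Qed.

Lemma glued_tripod_or_triangle {A : Type} {G1 G2 G3 : R -> A} {D1 D2 D3 a b c : R} :
  glued_along_spikes G1 G2 G3 D1 D2 D3 a b c ->
  (a + b = D1 /\ b + c = D2 /\ c + a = D3) \/ (a + b < D1 /\ b + c < D2 /\ c + a < D3).
Proof.
  intros Gl. pose proof (glued_rotate Gl) as Gl2. pose proof (glued_rotate Gl2) as Gl3.
  pose proof (glued_spikes_le_side Gl). pose proof (glued_spikes_le_side Gl2).
  pose proof (glued_spikes_le_side Gl3). pose proof (glued_spikes_fill_next_side Gl).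
  pose proof (glued_spikes_fill_next_side Gl2). pose proof (glued_spikes_fill_next_side Gl3).
  lra.
Qed.

Definition sides_injective {A : Type} (D : R * R * R) (G : (R -> A) * (R -> A) * (R -> A)) :=
  forall k s s', 0 <= s <= side3 D k -> 0 <= s' <= side3 D k ->
    side3 G k s = side3 G k s' -> s = s'.

Definition same_gluing {A B : Type} (D : R * R * R)
  (G : (R -> A) * (R -> A) * (R -> A)) (F : (R -> B) * (R -> B) * (R -> B)) :=
  forall k j s s', 0 <= s <= side3 D k -> 0 <= s' <= side3 D j ->
    (side3 G k s = side3 G j s' <-> side3 F k s = side3 F j s').

(* Where two sides of a triangle glued along spikes meet, in terms of the lengths alone. *)
Definition spike_pattern (D1 D2 D3 a b c : R) (k j : nat) (s s' : R) : Prop :=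
  match k, j with
  | O, S O => s' = D1 - s /\ s' <= b
  | S O, O => s = D1 - s' /\ s <= b
  | S O, S (S _) => s' = D2 - s /\ s' <= c
  | S (S _), S O => s = D2 - s' /\ s <= c
  | S (S _), O => s' = D3 - s /\ s' <= a
  | O, S (S _) => s = D3 - s' /\ s <= a
  | _, _ => s = s'
  end.

Lemma glued_spike_pattern {A : Type} {G1 G2 G3 : R -> A} {D1 D2 D3 a b c : R} :
  glued_along_spikes G1 G2 G3 D1 D2 D3 a b c -> sides_injective (D1, D2, D3) (G1, G2, G3) ->
  forall k j s s', 0 <= s <= side3 (D1, D2, D3) k -> 0 <= s' <= side3 (D1, D2, D3) j ->
    (side3 (G1, G2, G3) k s = side3 (G1, G2, G3) j s' <-> spike_pattern D1 D2 D3 a b c k j s s').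
Proof.
  intros [_ Gx Gy Gz] Inj k j s s' Hs Hs'.
  assert (Esym : forall (p q : A) (P : Prop), (q = p <-> P) -> (p = q <-> P))
    by (intros p q P H; rewrite <- H; split; apply eq_sym).
  destruct k as [|[|k]]; destruct j as [|[|j]]; cbn [side3 spike_pattern fst snd] in *;
    auto using Esym.
  - split; [apply (Inj O) | intros ->]; auto.
  - split; [apply (Inj (S O)) | intros ->]; auto.
  - split; [apply (Inj (S (S O))) | intros ->]; auto.
Qed.

Lemma glued_same_gluing {A B : Type} {G1 G2 G3 : R -> A} {F1 F2 F3 : R -> B} {D1 D2 D3 a b c : R} :
  glued_along_spikes G1 G2 G3 D1 D2 D3 a b c -> glued_along_spikes F1 F2 F3 D1 D2 D3 a b c ->
  sides_injective (D1, D2, D3) (G1, G2, G3) -> sides_injective (D1, D2, D3) (F1, F2, F3) ->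
  same_gluing (D1, D2, D3) (G1, G2, G3) (F1, F2, F3).
Proof.
  intros GlG GlF IG IF k j s s' Hs Hs'.
  now rewrite (glued_spike_pattern GlG IG), (glued_spike_pattern GlF IF).
Qed.

Definition on_trace {A : Type} (D : R * R * R) (G : (R -> A) * (R -> A) * (R -> A)) (a : A) :=
  exists k s, 0 <= s <= side3 D k /\ a = side3 G k s.

Definition bilipschitz_sides {A : Type} (dA : A -> A -> R) (D : R * R * R)
  (G : (R -> A) * (R -> A) * (R -> A)) :=
  exists c K, 0 < c /\ 0 < K /\
  forall k s s', 0 <= s <= side3 D k -> 0 <= s' <= side3 D k ->
    c * Rabs (s - s') <= dA (side3 G k s) (side3 G k s') <= K * Rabs (s - s').

Definition homeomorphic {A B : Type} (dA : A -> A -> R) (dB : B -> B -> R)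
  (T : A -> Prop) (S : B -> Prop) :=
  exists (f : A -> B) (g : B -> A),
    (forall a, T a -> S (f a) /\ g (f a) = a) /\
    (forall b, S b -> T (g b) /\ f (g b) = b) /\
    cont_on dA dB f T /\ cont_on dB dA g S.

Lemma homeomorphic_ext {A B : Type} (dA : A -> A -> R) (dB : B -> B -> R) T T' S S' :
  (forall a, T a <-> T' a) -> (forall b, S b <-> S' b) ->
  homeomorphic dA dB T' S' -> homeomorphic dA dB T S.
Proof.
  intros ET ES (f & g & Hf & Hg & Cf & Cg). exists f, g.
  split; [|split; [|split]].
  - intros a Ha. rewrite ES. apply Hf, ET, Ha.
  - intros b Hb. rewrite ET. apply Hg, ES, Hb.
  - intros a Ha e He. destruct (Cf a (proj1 (ET a) Ha) e He) as (del & Hdel & C).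
    exists del. split; [exact Hdel|]. intros a' Ha'. apply C, ET, Ha'.
  - intros b Hb e He. destruct (Cg b (proj1 (ES b) Hb) e He) as (del & Hdel & C).
    exists del. split; [exact Hdel|]. intros b' Hb'. apply C, ES, Hb'.
Qed.

Lemma bilipschitz_sides_injective {A : Type} (dA : A -> A -> R) D G :
  is_metric dA -> bilipschitz_sides dA D G -> sides_injective D G.
Proof.
  intros Hm (c & K & Hc & _ & HG) k s s' Hs Hs' E.
  specialize (HG k s s' Hs Hs'). rewrite E, (metric_self Hm) in HG.
  pose proof (Rabs_pos (s - s')). assert (Z : Rabs (s - s') = 0) by nra.
  revert Z. unfold Rabs. destruct (Rcase_abs (s - s')); lra.
Qed.

Lemma lipschitz_pos_bounded_below (psi : R -> R) D K :
  (forall t t', 0 <= t <= D -> 0 <= t' <= D -> Rabs (psi t - psi t') <= K * Rabs (t - t')) ->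
  (forall t, 0 <= t <= D -> 0 < psi t) ->
  exists del, 0 < del /\ forall t, 0 <= t <= D -> del <= psi t.
Proof.
  intros Hlip Hpos. destruct (Rlt_le_dec D 0) as [HD|HD].
  { exists 1. split; [lra|]. intros t Ht. lra. }
  (* Extending [psi] constantly outside [[0, D]] allows the extreme value theorem. *)
  set (proj t := Rmax 0 (Rmin D t)).
  assert (Hproj : forall t, 0 <= proj t <= D) by (intros t; unfold proj; case_minmax).
  assert (Hproj_lip : forall t t', Rabs (proj t - proj t') <= Rabs (t - t'))
    by (intros t t'; unfold proj; case_minmax).
  assert (Hproj_id : forall t, 0 <= t <= D -> proj t = t).
  { intros t Ht. unfold proj. rewrite Rmin_right by lra. apply Rmax_right. lra. }
  assert (Hcont : forall c, 0 <= c <= D -> continuity_pt (fun t => psi (proj t)) c).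
  { intros c _. unfold continuity_pt, continue_in, limit1_in, limit_in. simpl. unfold R_dist.
    intros eps He. pose proof (Rabs_pos K).
    exists (eps / (Rabs K + 1)). split; [apply Rdiv_lt_0_compat; lra|].
    intros t [_ Ht].
    apply Rle_lt_trans with (Rabs K * Rabs (t - c)).
    - eapply Rle_trans; [apply Hlip; apply Hproj|].
      eapply Rle_trans; [apply Rmult_le_compat_r; [apply Rabs_pos | apply RRle_abs]|].
      apply Rmult_le_compat_l; [apply Rabs_pos | apply Hproj_lip].
    - apply Rle_lt_trans with (Rabs K * (eps / (Rabs K + 1))); [nra|].
      apply Rmult_lt_reg_r with (Rabs K + 1); [lra|].
      replace (Rabs K * (eps / (Rabs K + 1)) * (Rabs K + 1)) with (Rabs K * eps)
        by (field; lra).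
      nra. }
  destruct (continuity_ab_min (fun t => psi (proj t)) 0 D HD Hcont) as (tmin & Hmin & Htmin).
  exists (psi tmin). split.
  - apply Hpos, Htmin.
  - intros t Ht. specialize (Hmin t Ht). cbv beta in Hmin.
    now rewrite !Hproj_id in Hmin.
Qed.

Lemma dist_to_side_bounded_below {A : Type} (dA : A -> A -> R) (g : R -> A) D K a :
  is_metric dA ->
  (forall s s', 0 <= s <= D -> 0 <= s' <= D -> dA (g s) (g s') <= K * Rabs (s - s')) ->
  ~ (exists s, 0 <= s <= D /\ a = g s) ->
  exists del, 0 < del /\ forall s, 0 <= s <= D -> del <= dA a (g s).
Proof.
  intros Hm Hlip Hout. apply lipschitz_pos_bounded_below with K.
  - intros t t' Ht Ht'. eapply Rle_trans; [apply (metric_lipschitz Hm)|]. auto.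
  - intros t Ht. destruct (Rle_lt_or_eq_dec 0 (dA a (g t)) (metric_nonneg Hm a (g t)))
      as [Hpos|Hz]; [exact Hpos|].
    exfalso. apply Hout. exists t. split; [exact Ht|]. now apply (metric_eq0 Hm).
Qed.

(* The parameter (k, s) of [a] is picked by [epsilon]; the choice does not matter when
   [G] and [F] have the same gluing. *)
Definition trace_map {A B : Type} (D : R * R * R)
  (G : (R -> A) * (R -> A) * (R -> A)) (F : (R -> B) * (R -> B) * (R -> B)) (a : A) : B :=
  let ks := epsilon (inhabits (O, 0))
    (fun ks => 0 <= snd ks <= side3 D (fst ks) /\ a = side3 G (fst ks) (snd ks)) in
  side3 F (fst ks) (snd ks).

Lemma trace_map_side {A B : Type} D (G : (R -> A) * (R -> A) * (R -> A))
  (F : (R -> B) * (R -> B) * (R -> B)) k s :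
  same_gluing D G F -> 0 <= s <= side3 D k -> trace_map D G F (side3 G k s) = side3 F k s.
Proof.
  intros Hglue Hs. unfold trace_map.
  destruct (epsilon_spec (inhabits (O, 0))
    (fun ks => 0 <= snd ks <= side3 D (fst ks) /\ side3 G k s = side3 G (fst ks) (snd ks)))
    as [Hks E]; [now exists (k, s)|].
  symmetry. now apply Hglue.
Qed.

Lemma trace_map_continuous {A B : Type} (dA : A -> A -> R) (dB : B -> B -> R) D G F :
  is_metric dA -> bilipschitz_sides dA D G -> bilipschitz_sides dB D F -> same_gluing D G F ->
  cont_on dA dB (trace_map D G F) (on_trace D G).
Proof.
  intros HmA (cG & KG & HcG & HKG & HG) (cF & KF & HcF & HKF & HF) Hglue a _ e He.
  assert (near_side : forall j, exists del, 0 < del /\ forall s, 0 <= s <= side3 D j ->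
    dA a (side3 G j s) < del -> dB (trace_map D G F a) (side3 F j s) < e).
  { intros j.
    destruct (classic (exists s1, 0 <= s1 <= side3 D j /\ a = side3 G j s1))
      as [(s1 & Hs1 & ->)|Hout].
    - exists (cG * e / KF). split; [apply Rdiv_lt_0_compat; nra|].
      intros s Hs Hd. rewrite trace_map_side by assumption.
      destruct (HG j s1 s Hs1 Hs) as [HGlo _]. destruct (HF j s1 s Hs1 Hs) as [_ HFup].
      assert (Hclose : Rabs (s1 - s) < e / KF).
      { apply Rmult_lt_reg_l with cG; [exact HcG|].
        apply Rle_lt_trans with (1 := HGlo). unfold Rdiv in *. lra. }
      apply Rle_lt_trans with (1 := HFup).
      apply Rmult_lt_reg_r with (/ KF); [apply Rinv_0_lt_compat, HKF|].
      replace (KF * Rabs (s1 - s) * / KF) with (Rabs (s1 - s)) by (field; lra).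
      exact Hclose.
    - destruct (dist_to_side_bounded_below dA (side3 G j) (side3 D j) KG a HmA)
        as (del & Hdel & Hfar).
      + intros s s' Hs Hs'. apply (HG j s s' Hs Hs').
      + exact Hout.
      + exists del. split; [exact Hdel|]. intros s Hs Hd. specialize (Hfar s Hs). lra. }
  destruct (near_side O) as (d0 & H0 & N0).
  destruct (near_side (S O)) as (d1 & H1 & N1).
  destruct (near_side (S (S O))) as (d2 & H2 & N2).
  exists (Rmin d0 (Rmin d1 d2)). split; [now repeat apply Rmin_glb_lt|].
  intros a' (j & s & Hs & ->) Hd. rewrite trace_map_side by assumption.
  pose proof (Rmin_l d0 (Rmin d1 d2)). pose proof (Rmin_r d0 (Rmin d1 d2)).
  pose proof (Rmin_l d1 d2). pose proof (Rmin_r d1 d2).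
  destruct j as [|[|j]]; cbn [side3] in *; [apply N0 | apply N1 | apply N2]; auto; lra.
Qed.

Lemma traces_homeomorphic {A B : Type} (dA : A -> A -> R) (dB : B -> B -> R) D G F :
  is_metric dA -> is_metric dB -> bilipschitz_sides dA D G -> bilipschitz_sides dB D F ->
  same_gluing D G F -> homeomorphic dA dB (on_trace D G) (on_trace D F).
Proof.
  intros HmA HmB HG HF Hglue.
  assert (Hglue' : same_gluing D F G) by (intros k j s s' Hs Hs'; symmetry; now apply Hglue).
  exists (trace_map D G F), (trace_map D F G).
  split; [|split; [|split]].
  - intros a (k & s & Hs & ->). rewrite !trace_map_side by assumption.
    split; [now exists k, s | reflexivity].
  - intros b (k & s & Hs & ->). rewrite !trace_map_side by assumption.
    split; [now exists k, s | reflexivity].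
  - now apply trace_map_continuous.
  - now apply trace_map_continuous.
Qed.

Lemma bilipschitz_sides_intro {A : Type} (dA : A -> A -> R) D G :
  (forall k, exists c K, 0 < c /\ 0 < K /\
     forall s s', 0 <= s <= side3 D k -> 0 <= s' <= side3 D k ->
       c * Rabs (s - s') <= dA (side3 G k s) (side3 G k s') <= K * Rabs (s - s')) ->
  bilipschitz_sides dA D G.
Proof.
  intros Hside.
  destruct (Hside O) as (c0 & K0 & Hc0 & HK0 & H0).
  destruct (Hside (S O)) as (c1 & K1 & Hc1 & HK1 & H1).
  destruct (Hside (S (S O))) as (c2 & K2 & Hc2 & HK2 & H2).
  exists (Rmin c0 (Rmin c1 c2)), (Rmax K0 (Rmax K1 K2)).
  split; [now repeat apply Rmin_glb_lt|].
  split; [apply Rlt_le_trans with K0; [exact HK0 | apply Rmax_l]|].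
  pose proof (Rmin_l c0 (Rmin c1 c2)). pose proof (Rmin_r c0 (Rmin c1 c2)).
  pose proof (Rmin_l c1 c2). pose proof (Rmin_r c1 c2).
  pose proof (Rmax_l K0 (Rmax K1 K2)). pose proof (Rmax_r K0 (Rmax K1 K2)).
  pose proof (Rmax_l K1 K2). pose proof (Rmax_r K1 K2).
  intros k s s' Hs Hs'. pose proof (Rabs_pos (s - s')).
  destruct k as [|[|k]]; cbn [side3] in *;
    [destruct (H0 s s' Hs Hs') | destruct (H1 s s' Hs Hs') | destruct (H2 s s' Hs Hs')];
    split; nra.
Qed.

Lemma bilipschitz_of_retraction {A : Type} (dA : A -> A -> R) (f : R -> A) (r : A -> R) D M K :
  0 < M -> 0 < K -> (forall s, 0 <= s <= D -> r (f s) = s) ->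
  (forall u v, Rabs (r u - r v) <= M * dA u v) ->
  (forall s s', 0 <= s <= D -> 0 <= s' <= D -> dA (f s) (f s') <= K * Rabs (s - s')) ->
  exists c K, 0 < c /\ 0 < K /\ forall s s', 0 <= s <= D -> 0 <= s' <= D ->
    c * Rabs (s - s') <= dA (f s) (f s') <= K * Rabs (s - s').
Proof.
  intros HM HK Hr Hrlip Hflip. exists (/ M), K.
  split; [now apply Rinv_0_lt_compat|]. split; [exact HK|].
  intros s s' Hs Hs'. split; [|now apply Hflip].
  apply Rmult_le_reg_l with M; [exact HM|].
  rewrite <- Rmult_assoc, Rinv_r, Rmult_1_l by lra.
  rewrite <- (Hr s Hs) at 1. rewrite <- (Hr s' Hs') at 1. apply Hrlip.
Qed.

Lemma dist5_explicit p1 p2 q1 q2 q3 p1' p2' q1' q2' q3' :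
  dist5 ((p1, p2), (q1, q2, q3)) ((p1', p2'), (q1', q2', q3')) =
  sqrt ((p1 - p1')^2 + (p2 - p2')^2 + (q1 - q1')^2 + (q2 - q2')^2 + (q3 - q3')^2).
Proof. reflexivity. Qed.

Lemma cauchy_schwarz5 x1 x2 x3 x4 x5 y1 y2 y3 y4 y5 :
  (x1 * y1 + x2 * y2 + x3 * y3 + x4 * y4 + x5 * y5) ^ 2 <=
  (x1^2 + x2^2 + x3^2 + x4^2 + x5^2) * (y1^2 + y2^2 + y3^2 + y4^2 + y5^2).
Proof.
  (* Lagrange's identity *)
  replace ((x1^2 + x2^2 + x3^2 + x4^2 + x5^2) * (y1^2 + y2^2 + y3^2 + y4^2 + y5^2))
    with ((x1 * y1 + x2 * y2 + x3 * y3 + x4 * y4 + x5 * y5) ^ 2 +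
          ((x1 * y2 - x2 * y1)^2 + (x1 * y3 - x3 * y1)^2 + (x1 * y4 - x4 * y1)^2 +
           (x1 * y5 - x5 * y1)^2 + (x2 * y3 - x3 * y2)^2 + (x2 * y4 - x4 * y2)^2 +
           (x2 * y5 - x5 * y2)^2 + (x3 * y4 - x4 * y3)^2 + (x3 * y5 - x5 * y3)^2 +
           (x4 * y5 - x5 * y4)^2)) by ring.
  match goal with |- _ <= _ + ?S => assert (0 <= S) by
    (repeat apply Rplus_le_le_0_compat; apply pow2_ge_0) end.
  lra.
Qed.

Lemma euclid5_triangle x1 x2 x3 x4 x5 y1 y2 y3 y4 y5 :
  sqrt ((x1 + y1)^2 + (x2 + y2)^2 + (x3 + y3)^2 + (x4 + y4)^2 + (x5 + y5)^2) <=
  sqrt (x1^2 + x2^2 + x3^2 + x4^2 + x5^2) + sqrt (y1^2 + y2^2 + y3^2 + y4^2 + y5^2).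
Proof.
  set (X := x1^2 + x2^2 + x3^2 + x4^2 + x5^2).
  set (Y := y1^2 + y2^2 + y3^2 + y4^2 + y5^2).
  set (XY := x1 * y1 + x2 * y2 + x3 * y3 + x4 * y4 + x5 * y5).
  assert (HX : 0 <= X) by (unfold X; repeat apply Rplus_le_le_0_compat; apply pow2_ge_0).
  assert (HY : 0 <= Y) by (unfold Y; repeat apply Rplus_le_le_0_compat; apply pow2_ge_0).
  assert (Hcs : XY <= sqrt X * sqrt Y).
  { rewrite <- sqrt_mult by assumption.
    apply Rle_trans with (Rabs XY); [apply RRle_abs|].
    rewrite <- (sqrt_pow2 (Rabs XY)) by apply Rabs_pos. apply sqrt_le_1_alt.
    rewrite pow2_abs. apply cauchy_schwarz5. }
  pose proof (sqrt_pos X). pose proof (sqrt_pos Y).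
  rewrite <- (sqrt_pow2 (sqrt X + sqrt Y)) by lra. apply sqrt_le_1_alt.
  replace ((sqrt X + sqrt Y) ^ 2) with (sqrt X * sqrt X + sqrt Y * sqrt Y + 2 * (sqrt X * sqrt Y))
    by ring.
  rewrite !sqrt_sqrt by assumption. unfold X, Y, XY in *. nra.
Qed.

Lemma dist5_metric : is_metric dist5.
Proof.
  assert (Hsq : forall a b c e f : R, 0 <= a^2 + b^2 + c^2 + e^2 + f^2)
    by (intros; repeat apply Rplus_le_le_0_compat; apply pow2_ge_0).
  repeat split.
  - intros [[? ?] [[? ?] ?]] [[? ?] [[? ?] ?]]. apply sqrt_pos.
  - intros [[? ?] [[? ?] ?]]. rewrite dist5_explicit, !Rminus_diag, pow_i, !Rplus_0_r by lia.
    apply sqrt_0.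
  - intros [[p1 p2] [[q1 q2] q3]] [[p1' p2'] [[q1' q2'] q3']]. rewrite dist5_explicit. intros Z.
    apply sqrt_eq_0 in Z; [|apply Hsq].
    pose proof (pow2_ge_0 (p1 - p1')). pose proof (pow2_ge_0 (p2 - p2')).
    pose proof (pow2_ge_0 (q1 - q1')). pose proof (pow2_ge_0 (q2 - q2')).
    pose proof (pow2_ge_0 (q3 - q3')).
    repeat f_equal; nra.
  - intros [[? ?] [[? ?] ?]] [[? ?] [[? ?] ?]]. rewrite !dist5_explicit. f_equal. ring.
  - intros [[p1 p2] [[q1 q2] q3]] [[p1' p2'] [[q1' q2'] q3']] [[p1'' p2''] [[q1'' q2''] q3'']].
    rewrite !dist5_explicit.
    replace (p1 - p1'') with ((p1 - p1') + (p1' - p1'')) by ring.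
    replace (p2 - p2'') with ((p2 - p2') + (p2' - p2'')) by ring.
    replace (q1 - q1'') with ((q1 - q1') + (q1' - q1'')) by ring.
    replace (q2 - q2'') with ((q2 - q2') + (q2' - q2'')) by ring.
    replace (q3 - q3'') with ((q3 - q3') + (q3' - q3'')) by ring.
    apply euclid5_triangle.
Qed.

Lemma Rabs_le_sqrt_add x S : 0 <= S -> Rabs x <= sqrt (x ^ 2 + S).
Proof.
  intros HS. rewrite <- (sqrt_pow2 (Rabs x)) by apply Rabs_pos.
  apply sqrt_le_1_alt. rewrite pow2_abs. lra.
Qed.

Lemma dist5_ge_coords p1 p2 q1 q2 q3 p1' p2' q1' q2' q3' :
  let u := ((p1, p2), (q1, q2, q3)) : R2 * R3 in
  let v := ((p1', p2'), (q1', q2', q3')) : R2 * R3 in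
  Rabs (p1 - p1') <= dist5 u v /\ Rabs (p2 - p2') <= dist5 u v /\
  Rabs (q1 - q1') <= dist5 u v /\ Rabs (q2 - q2') <= dist5 u v /\ Rabs (q3 - q3') <= dist5 u v.
Proof.
  cbv zeta. rewrite dist5_explicit.
  pose proof (pow2_ge_0 (p1 - p1')). pose proof (pow2_ge_0 (p2 - p2')).
  pose proof (pow2_ge_0 (q1 - q1')). pose proof (pow2_ge_0 (q2 - q2')).
  pose proof (pow2_ge_0 (q3 - q3')).
  repeat split; match goal with |- Rabs ?x <= sqrt ?T =>
    replace T with (x ^ 2 + (T - x ^ 2)) by ring; apply Rabs_le_sqrt_add; lra end.
Qed.

Lemma dist5_le_l1 p1 p2 q1 q2 q3 p1' p2' q1' q2' q3' :
  dist5 ((p1, p2), (q1, q2, q3)) ((p1', p2'), (q1', q2', q3')) <=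
  Rabs (p1 - p1') + Rabs (p2 - p2') + Rabs (q1 - q1') + Rabs (q2 - q2') + Rabs (q3 - q3').
Proof.
  rewrite dist5_explicit.
  pose proof (Rabs_pos (p1 - p1')). pose proof (Rabs_pos (p2 - p2')).
  pose proof (Rabs_pos (q1 - q1')). pose proof (Rabs_pos (q2 - q2')).
  pose proof (Rabs_pos (q3 - q3')).
  rewrite <- sqrt_pow2 by lra. apply sqrt_le_1_alt.
  rewrite <- (pow2_abs (p1 - p1')), <- (pow2_abs (p2 - p2')), <- (pow2_abs (q1 - q1')),
    <- (pow2_abs (q2 - q2')), <- (pow2_abs (q3 - q3')).
  nra.
Qed.

Definition pos_part (x : R) : R := Rmax 0 x.
Definition clamp01 (x : R) : R := Rmax 0 (Rmin 1 x).

Ltac case_ramp := unfold pos_part, clamp01; case_minmax.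

Lemma pos_part_lipschitz x y : Rabs (pos_part x - pos_part y) <= Rabs (x - y).
Proof. case_ramp. Qed.

Lemma clamp01_lipschitz x y : Rabs (clamp01 x - clamp01 y) <= Rabs (x - y).
Proof. case_ramp. Qed.

(* Position on the core edge of a side of length [D] whose first [st] and last [en] units
   run along spikes; when the core edge is degenerate, [/ 0 = 0] makes it constantly 0. *)
Definition core_coord (st en D s : R) : R := clamp01 ((s - st) / (D - st - en)).

Lemma pos_part_nonpos x : x <= 0 -> pos_part x = 0.
Proof. intros. case_ramp. Qed.

Lemma core_coord_lipschitz st en D s s' :
  Rabs (core_coord st en D s - core_coord st en D s') <= Rabs (/ (D - st - en)) * Rabs (s - s').
Proof.
  eapply Rle_trans; [apply clamp01_lipschitz|].
  replace ((s - st) / (D - st - en) - (s' - st) / (D - st - en))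
    with (/ (D - st - en) * (s - s')) by (unfold Rdiv; ring).
  rewrite Rabs_mult. lra.
Qed.

(* [sg = 0] for a tripod, whose core triangle is a point, and [sg = 1] otherwise. *)
Definition side_config (sg st en D : R) : Prop :=
  0 <= st /\ 0 <= en /\ ((sg = 0 /\ st + en = D) \/ (sg = 1 /\ st + en < D)).

Lemma side_pieces sg st en D s :
  side_config sg st en D -> 0 <= s <= D ->
  (s <= st /\ core_coord st en D s = 0 /\ (D - st - en) * core_coord st en D s = 0 /\
     pos_part (st - s) = st - s /\ pos_part (s - (D - en)) = 0) \/
  (st < s < D - en /\ sg = 1 /\ 0 < core_coord st en D s < 1 /\
     (D - st - en) * core_coord st en D s = s - st /\
     pos_part (st - s) = 0 /\ pos_part (s - (D - en)) = 0) \/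
  (D - en <= s /\ core_coord st en D s = sg /\
     (D - st - en) * core_coord st en D s = D - st - en /\
     pos_part (st - s) = 0 /\ pos_part (s - (D - en)) = s - (D - en)).
Proof.
  unfold core_coord. intros (Hst & Hen & [(-> & HD)|(-> & HD)]) Hs.
  - replace (D - st - en) with 0 by lra. unfold Rdiv. rewrite Rinv_0, Rmult_0_r.
    replace (clamp01 0) with 0 by case_ramp.
    destruct (Rle_lt_dec s st); [left | right; right];
      (split; [lra|]); repeat split; case_ramp.
  - set (L := D - st - en). assert (HL : 0 < L) by (unfold L; lra).
    assert (E : L * ((s - st) / L) = s - st) by (field; lra).
    destruct (Rle_lt_dec s st); [|destruct (Rlt_le_dec s (D - en))].
    + left. assert ((s - st) / L <= 0)
        by (apply Rmult_le_reg_l with L; [exact HL | rewrite E; lra]).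
      assert (Hc : clamp01 ((s - st) / L) = 0) by case_ramp. rewrite Hc.
      repeat split; try lra; case_ramp.
    + right; left. assert (0 < (s - st) / L < 1).
      { split; [apply Rdiv_lt_0_compat; lra|].
        apply Rmult_lt_reg_l with L; [exact HL | rewrite E; unfold L; lra]. }
      assert (Hc : clamp01 ((s - st) / L) = (s - st) / L) by case_ramp. rewrite Hc.
      repeat split; try lra; case_ramp.
    + right; right. assert (1 <= (s - st) / L).
      { apply Rmult_le_reg_l with L; [exact HL | rewrite E; unfold L; lra]. }
      assert (Hc : clamp01 ((s - st) / L) = 1) by case_ramp. rewrite Hc.
      repeat split; try lra; case_ramp.
Qed.

Lemma core_coord_at sg st en D th :
  side_config sg st en D -> 0 <= th <= 1 ->
  core_coord st en D (st + th * (D - st - en)) = th * sg.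
Proof.
  unfold core_coord. intros (_ & _ & [(-> & HD)|(-> & HD)]) Hth.
  - replace (D - st - en) with 0 by lra. unfold Rdiv. rewrite Rinv_0, !Rmult_0_r.
    case_ramp.
  - replace ((st + th * (D - st - en) - st) / (D - st - en)) with th by (field; lra).
    rewrite Rmult_1_r. case_ramp.
Qed.

Definition spike_config (al be ga D1 D2 D3 sg : R) : Prop :=
  side_config sg al be D1 /\ side_config sg be ga D2 /\ side_config sg ga al D3.

(* The sides of the model spiky triangle with core triangle (0,0), (sg,0), (0,sg) and
   spikes along the three axes of R^3: each side runs in along the spike of its first
   vertex, crosses the core edge, and runs out along the spike of its last vertex. *)
Definition model_side1 (al be D1 : R) (s : R) : R2 * R3 :=
  ((core_coord al be D1 s, 0), ((pos_part (al - s), pos_part (s - (D1 - be))), 0)).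

Definition model_side2 (be ga D2 sg : R) (s : R) : R2 * R3 :=
  ((sg - core_coord be ga D2 s, core_coord be ga D2 s),
   ((0, pos_part (be - s)), pos_part (s - (D2 - ga)))).

Definition model_side3 (ga al D3 sg : R) (s : R) : R2 * R3 :=
  ((0, sg - core_coord ga al D3 s), ((pos_part (s - (D3 - al)), 0), pos_part (ga - s))).

Definition model_sides (al be ga D1 D2 D3 sg : R) :=
  (model_side1 al be D1, model_side2 be ga D2 sg, model_side3 ga al D3 sg).

Ltac pair_eq := repeat (apply injective_projections; cbn [fst snd]).

(* Along a model side, s = st - (spike-in coordinate) + L * (core coordinate)
   + (spike-out coordinate), where L is the length of the core edge. *)
Definition model_recover1 (al L1 : R) (u : R2 * R3) : R :=
  let '((p1, _), ((q1, q2), _)) := u in al - q1 + L1 * p1 + q2.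

Definition model_recover2 (be L2 : R) (u : R2 * R3) : R :=
  let '((_, p2), ((_, q2), q3)) := u in be - q2 + L2 * p2 + q3.

Definition model_recover3 (ga L3 sg : R) (u : R2 * R3) : R :=
  let '((_, p2), ((q1, _), q3)) := u in ga - q3 + L3 * (sg - p2) + q1.

Lemma Rabs_affine_diff a L x y z x' y' z' m :
  Rabs (x - x') <= m -> Rabs (y - y') <= m -> Rabs (z - z') <= m ->
  Rabs ((a - x + L * y + z) - (a - x' + L * y' + z')) <= (2 + Rabs L) * m.
Proof.
  intros Hx Hy Hz.
  replace ((a - x + L * y + z) - (a - x' + L * y' + z'))
    with (- (x - x') + L * (y - y') + (z - z')) by ring.
  eapply Rle_trans; [apply Rabs_triang|].
  eapply Rle_trans; [apply Rplus_le_compat_r, Rabs_triang|].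
  rewrite Rabs_Ropp, Rabs_mult. pose proof (Rabs_pos L). nra.
Qed.

Lemma model_recover_lipschitz al be ga L sg u v :
  Rabs (model_recover1 al L u - model_recover1 al L v) <= (2 + Rabs L) * dist5 u v /\
  Rabs (model_recover2 be L u - model_recover2 be L v) <= (2 + Rabs L) * dist5 u v /\
  Rabs (model_recover3 ga L sg u - model_recover3 ga L sg v) <= (2 + Rabs L) * dist5 u v.
Proof.
  destruct u as [[p1 p2] [[q1 q2] q3]], v as [[p1' p2'] [[q1' q2'] q3']].
  destruct (dist5_ge_coords p1 p2 q1 q2 q3 p1' p2' q1' q2' q3') as (H1 & H2 & H3 & H4 & H5).
  cbn zeta in *. cbn [model_recover1 model_recover2 model_recover3].
  split; [|split]; apply Rabs_affine_diff; auto.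
  replace (sg - p2 - (sg - p2')) with (- (p2 - p2')) by ring. now rewrite Rabs_Ropp.
Qed.

Lemma model_sides_lipschitz al be ga D1 D2 D3 sg s s' :
  dist5 (model_side1 al be D1 s) (model_side1 al be D1 s')
    <= (2 + 2 * Rabs (/ (D1 - al - be))) * Rabs (s - s') /\
  dist5 (model_side2 be ga D2 sg s) (model_side2 be ga D2 sg s')
    <= (2 + 2 * Rabs (/ (D2 - be - ga))) * Rabs (s - s') /\
  dist5 (model_side3 ga al D3 sg s) (model_side3 ga al D3 sg s')
    <= (2 + 2 * Rabs (/ (D3 - ga - al))) * Rabs (s - s').
Proof.
  assert (Hin : forall st, Rabs (pos_part (st - s) - pos_part (st - s')) <= Rabs (s - s')).
  { intros st. eapply Rle_trans; [apply pos_part_lipschitz|].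
    rewrite Rabs_minus_sym. right. f_equal. ring. }
  assert (Hout : forall e, Rabs (pos_part (s - e) - pos_part (s' - e)) <= Rabs (s - s')).
  { intros e. eapply Rle_trans; [apply pos_part_lipschitz|]. right. f_equal. ring. }
  assert (Hcore : forall st en D, Rabs (sg - core_coord st en D s - (sg - core_coord st en D s'))
                                   <= Rabs (/ (D - st - en)) * Rabs (s - s')).
  { intros st en D. eapply Rle_trans; [|apply core_coord_lipschitz].
    right. rewrite Rabs_minus_sym. f_equal. ring. }
  pose proof (Rabs_pos (s - s')).
  pose proof (Rabs_pos (/ (D1 - al - be))). pose proof (Rabs_pos (/ (D2 - be - ga))).
  pose proof (Rabs_pos (/ (D3 - ga - al))).
  split; [|split]; unfold model_side1, model_side2, model_side3;
    eapply Rle_trans; try apply dist5_le_l1; rewrite ?Rminus_diag, ?Rabs_R0.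
  - pose proof (core_coord_lipschitz al be D1 s s').
    pose proof (Hin al). pose proof (Hout (D1 - be)). nra.
  - pose proof (core_coord_lipschitz be ga D2 s s'). pose proof (Hcore be ga D2).
    pose proof (Hin be). pose proof (Hout (D2 - ga)). nra.
  - pose proof (Hcore ga al D3). pose proof (Hin ga). pose proof (Hout (D3 - al)). nra.
Qed.

Section SpikyModel.

Variables al be ga D1 D2 D3 sg : R.
Hypothesis config : spike_config al be ga D1 D2 D3 sg.

Let spiky := spiky_triangle (0, 0) (sg, 0) (0, sg) al be ga.
Let M := model_sides al be ga D1 D2 D3 sg.

Lemma model_side_spiky k s : 0 <= s <= side3 (D1, D2, D3) k -> spiky (side3 M k s).
Proof.
  destruct config as (C1 & C2 & C3). unfold spiky, spiky_triangle.
  destruct k as [|[|k]]; cbn [side3 fst snd M model_sides] in *; intros Hs.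
  - destruct (side_pieces _ _ _ _ s C1 Hs) as [P|[P|P]].
    + right; left. exists (al - s). split; [lra|]. unfold model_side1; pair_eq; lra.
    + destruct P as (Hmid & -> & P). left. split; [left | unfold model_side1; pair_eq; lra].
      exists (core_coord al be D1 s). split; [lra|]. unfold model_side1, interp2; pair_eq; lra.
    + right; right; left. exists (s - (D1 - be)). split; [lra|]. unfold model_side1; pair_eq; lra.
  - destruct (side_pieces _ _ _ _ s C2 Hs) as [P|[P|P]].
    + right; right; left. exists (be - s). split; [lra|]. unfold model_side2; pair_eq; lra.
    + destruct P as (Hmid & -> & P). left. split; [right; left | unfold model_side2; pair_eq; lra].
      exists (core_coord be ga D2 s). split; [lra|]. unfold model_side2, interp2; pair_eq; lra.
    + right; right; right. exists (s - (D2 - ga)). split; [lra|]. unfold model_side2; pair_eq; lra.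
  - destruct (side_pieces _ _ _ _ s C3 Hs) as [P|[P|P]].
    + right; right; right. exists (ga - s). split; [lra|]. unfold model_side3; pair_eq; lra.
    + destruct P as (Hmid & -> & P). left. split; [right; right | unfold model_side3; pair_eq; lra].
      exists (core_coord ga al D3 s). split; [lra|]. unfold model_side3, interp2; pair_eq; lra.
    + right; left. exists (s - (D3 - al)). split; [lra|]. unfold model_side3; pair_eq; lra.
Qed.

Lemma spiky_on_model_trace u : spiky u -> on_trace (D1, D2, D3) M u.
Proof.
  destruct config as (C1 & C2 & C3).
  pose proof C1 as (Hal & Hbe & _). pose proof C2 as (_ & Hga & _).
  assert (HL : forall st en D, side_config sg st en D -> 0 <= D - st - en)
    by (intros st en D (_ & _ & [H|H]); lra).
  pose proof (HL _ _ _ C1). pose proof (HL _ _ _ C2). pose proof (HL _ _ _ C3).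
  destruct u as [[p1 p2] [[q1 q2] q3]].
  intros [[[(th & Hth & E)|[(th & Hth & E)|(th & Hth & E)]] Z]
         |[(t & Ht & E)|[(t & Ht & E)|(t & Ht & E)]]];
    unfold interp2 in E; cbn [fst snd] in *; rewrite ?Z; rewrite E; clear E.
  - exists O, (al + th * (D1 - al - be)). split; [cbn; nra|].
    cbn [side3 fst snd M model_sides]. unfold model_side1.
    rewrite (core_coord_at _ _ _ _ _ C1 Hth), !pos_part_nonpos by nra. pair_eq; ring.
  - exists (S O), (be + th * (D2 - be - ga)). split; [cbn; nra|].
    cbn [side3 fst snd M model_sides]. unfold model_side2.
    rewrite (core_coord_at _ _ _ _ _ C2 Hth), !pos_part_nonpos by nra. pair_eq; ring.
  - exists (S (S O)), (ga + th * (D3 - ga - al)). split; [cbn; nra|].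
    cbn [side3 fst snd M model_sides]. unfold model_side3.
    rewrite (core_coord_at _ _ _ _ _ C3 Hth), !pos_part_nonpos by nra. pair_eq; ring.
  - exists O, (al - t). split; [cbn; lra|].
    destruct (side_pieces _ _ _ _ (al - t) C1 ltac:(lra)) as [P|[P|P]];
      destruct C1 as (_ & _ & [[? ?]|[? ?]]); cbn [side3 fst snd M model_sides];
      unfold model_side1; pair_eq; lra.
  - exists (S O), (be - t). split; [cbn; lra|].
    destruct (side_pieces _ _ _ _ (be - t) C2 ltac:(lra)) as [P|[P|P]];
      destruct C2 as (_ & _ & [[? ?]|[? ?]]); cbn [side3 fst snd M model_sides];
      unfold model_side2; pair_eq; lra.
  - exists (S (S O)), (ga - t). split; [cbn; lra|].
    destruct (side_pieces _ _ _ _ (ga - t) C3 ltac:(lra)) as [P|[P|P]];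
      destruct C3 as (_ & _ & [[? ?]|[? ?]]); cbn [side3 fst snd M model_sides];
      unfold model_side3; pair_eq; lra.
Qed.

Lemma model_glued :
  glued_along_spikes (model_side1 al be D1) (model_side2 be ga D2 sg) (model_side3 ga al D3 sg)
    D1 D2 D3 al be ga.
Proof.
  destruct config as (C1 & C2 & C3).
  pose proof C1 as (_ & _ & S1). pose proof C2 as (_ & _ & S2). pose proof C3 as (_ & _ & S3).
  assert (Hpt : forall a1 a2 b1 b2 b3 a1' a2' b1' b2' b3' : R,
    (((a1, a2), ((b1, b2), b3)) : R2 * R3) = ((a1', a2'), ((b1', b2'), b3')) <->
    a1 = a1' /\ a2 = a2' /\ b1 = b1' /\ b2 = b2' /\ b3 = b3').
  { intros. split; [intros E; injection E; intros; subst; tauto|].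
    intros (-> & -> & -> & -> & ->). reflexivity. }
  split; [unfold side_config in *; lra | | |]; intros s s' Hs Hs';
    unfold model_side1, model_side2, model_side3; rewrite Hpt.
  - destruct (side_pieces _ _ _ _ s C3 Hs) as [P|[P|P]];
    destruct (side_pieces _ _ _ _ s' C1 Hs') as [Q|[Q|Q]];
    split; intros; repeat split; lra.
  - destruct (side_pieces _ _ _ _ s C1 Hs) as [P|[P|P]];
    destruct (side_pieces _ _ _ _ s' C2 Hs') as [Q|[Q|Q]];
    split; intros; repeat split; lra.
  - destruct (side_pieces _ _ _ _ s C2 Hs) as [P|[P|P]];
    destruct (side_pieces _ _ _ _ s' C3 Hs') as [Q|[Q|Q]];
    split; intros; repeat split; lra.
Qed.

Lemma model_recover_sides s :
  (0 <= s <= D1 -> model_recover1 al (D1 - al - be) (model_side1 al be D1 s) = s) /\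
  (0 <= s <= D2 -> model_recover2 be (D2 - be - ga) (model_side2 be ga D2 sg s) = s) /\
  (0 <= s <= D3 -> model_recover3 ga (D3 - ga - al) sg (model_side3 ga al D3 sg s) = s).
Proof.
  destruct config as (C1 & C2 & C3).
  split; [|split]; intros Hs; cbn [model_recover1 model_recover2 model_recover3
    model_side1 model_side2 model_side3].
  - destruct (side_pieces _ _ _ _ s C1 Hs) as [P|[P|P]]; lra.
  - destruct (side_pieces _ _ _ _ s C2 Hs) as [P|[P|P]]; lra.
  - destruct (side_pieces _ _ _ _ s C3 Hs) as [P|[P|P]]; lra.
Qed.

Lemma model_bilipschitz : bilipschitz_sides dist5 (D1, D2, D3) M.
Proof.
  apply bilipschitz_sides_intro. intros k.
  assert (Hpos : forall x, 0 < 2 + Rabs x) by (intros x; pose proof (Rabs_pos x); lra).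
  assert (Hpos2 : forall x, 0 < 2 + 2 * Rabs x) by (intros x; pose proof (Rabs_pos x); lra).
  destruct k as [|[|k]]; cbn [side3 fst snd M model_sides].
  - apply (bilipschitz_of_retraction _ _ (model_recover1 al (D1 - al - be)) _ _ _
      (Hpos (D1 - al - be)) (Hpos2 (/ (D1 - al - be)))).
    + intros s Hs. now apply model_recover_sides.
    + intros u v. apply (model_recover_lipschitz al be ga _ sg).
    + intros s s' _ _. apply (model_sides_lipschitz al be ga D1 D2 D3 sg).
  - apply (bilipschitz_of_retraction _ _ (model_recover2 be (D2 - be - ga)) _ _ _
      (Hpos (D2 - be - ga)) (Hpos2 (/ (D2 - be - ga)))).
    + intros s Hs. now apply model_recover_sides.
    + intros u v. apply (model_recover_lipschitz al be ga _ sg).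
    + intros s s' _ _. apply (model_sides_lipschitz al be ga D1 D2 D3 sg).
  - apply (bilipschitz_of_retraction _ _ (model_recover3 ga (D3 - ga - al) sg) _ _ _
      (Hpos (D3 - ga - al)) (Hpos2 (/ (D3 - ga - al)))).
    + intros s Hs. now apply model_recover_sides.
    + intros u v. apply (model_recover_lipschitz al be ga _ sg).
    + intros s s' _ _. apply (model_sides_lipschitz al be ga D1 D2 D3 sg).
Qed.

Lemma spiky_triangle_model :
  (forall u, spiky u <-> on_trace (D1, D2, D3) M u) /\
  bilipschitz_sides dist5 (D1, D2, D3) M /\
  glued_along_spikes (model_side1 al be D1) (model_side2 be ga D2 sg) (model_side3 ga al D3 sg)
    D1 D2 D3 al be ga.
Proof.
  split; [|split; [exact model_bilipschitz | exact model_glued]].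
  intros u. split; [apply spiky_on_model_trace|].
  intros (k & s & Hs & ->). now apply model_side_spiky.
Qed.

End SpikyModel.

Lemma CAT0_triangle_glued {X : Type} (d : X -> X -> R) (x y z : X) :
  CAT0 d ->
  exists (G1 G2 G3 : R -> X) (al be ga : R),
    (forall p, geod_triangle d x y z p <-> on_trace (d x y, d y z, d z x) (G1, G2, G3) p) /\
    bilipschitz_sides d (d x y, d y z, d z x) (G1, G2, G3) /\
    glued_along_spikes G1 G2 G3 (d x y) (d y z) (d z x) al be ga.
Proof.
  intros Hc. pose proof (CAT0_is_metric d Hc) as Hm.
  destruct (proj2 (proj1 Hc) x y) as [g1 H1].
  destruct (proj2 (proj1 Hc) y z) as [g2 H2].
  destruct (proj2 (proj1 Hc) z x) as [g3 H3].
  destruct (CAT0_glued_at_vertex Hc x z y g1 g3 H1 H3) as (al & Hal & Gx).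
  destruct (CAT0_glued_at_vertex Hc y x z g2 g1 H2 H1) as (be & Hbe & Gy).
  destruct (CAT0_glued_at_vertex Hc z y x g3 g2 H3 H2) as (ga & Hga & Gz).
  pose proof (Rmin_l (d x y) (d z x)). pose proof (Rmin_r (d x y) (d z x)).
  pose proof (Rmin_l (d y z) (d x y)). pose proof (Rmin_r (d y z) (d x y)).
  pose proof (Rmin_l (d z x) (d y z)). pose proof (Rmin_r (d z x) (d y z)).
  exists (arc g1 (d x y)), (arc g2 (d y z)), (arc g3 (d z x)), al, be, ga.
  split; [|split].
  - intros p. unfold geod_triangle.
    rewrite (geod_seg_arc Hc x y g1 p H1), (geod_seg_arc Hc y z g2 p H2),
      (geod_seg_arc Hc z x g3 p H3).
    split.
    + intros [(s & Hs & E)|[(s & Hs & E)|(s & Hs & E)]];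
        [exists O | exists (S O) | exists (S (S O))]; now exists s.
    + intros (k & s & Hs & E). destruct k as [|[|k]]; cbn [side3 fst snd] in *; eauto 6.
  - exists 1, 1. split; [lra|]. split; [lra|].
    intros k s s' Hs Hs'. rewrite !Rmult_1_l.
    destruct k as [|[|k]]; cbn [side3 fst snd] in *; rewrite (arc_isometry Hm) by eauto; lra.
  - split; [lra | exact Gx | exact Gy | exact Gz].
Qed.

Lemma glued_spike_config {A : Type} {G1 G2 G3 : R -> A} {D1 D2 D3 al be ga : R} :
  glued_along_spikes G1 G2 G3 D1 D2 D3 al be ga -> exists sg, spike_config al be ga D1 D2 D3 sg.
Proof.
  intros Gl. pose proof Gl as [B _ _ _].
  destruct (glued_tripod_or_triangle Gl) as [Tri|Tri];
    [exists 0 | exists 1]; repeat split; lra.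
Qed.

Theorem lemma4p4 (X I : Type) (d : X -> X -> R)
  (P : I -> R2 -> Prop) (phi : I -> R2 -> X) :
  polygonal_complex d P phi -> CAT0 d ->
  forall x y z : X, homeomorphic_to_spiky_triangle d (geod_triangle d x y z).
Proof.
  intros _ Hc x y z. pose proof (CAT0_is_metric d Hc) as Hm.
  destruct (CAT0_triangle_glued d x y z Hc) as (G1 & G2 & G3 & al & be & ga & HT & HG & GlG).
  destruct (glued_spike_config GlG) as [sg Hcfg].
  destruct (spiky_triangle_model _ _ _ _ _ _ _ Hcfg) as (HS & HM & GlM).
  pose proof GlG as [B _ _ _].
  exists (0, 0), (sg, 0), (0, sg), al, be, ga.
  split; [lra | split; [lra | split; [lra |]]].
  apply (homeomorphic_ext _ _ _ _ _ _ HT HS).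
  apply traces_homeomorphic; [exact Hm | exact dist5_metric | exact HG | exact HM |].
  apply (glued_same_gluing GlG GlM).
  - exact (bilipschitz_sides_injective d _ _ Hm HG).
  - exact (bilipschitz_sides_injective dist5 _ _ dist5_metric HM).
Qed.
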